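(* Under the standing setting and assumptions (A1)–(A3) described in the context, assume that the acceptance set $\mathcal A$ is polyhedral. Then the optimal payoff map $\mathcal R$ is lower semicontinuous at every $X\in\mathcal X$.
   Context: Let $\mathcal X$ be a Hausdorff, first countable, locally convex topological vector space over $\mathbb R$ with topological dual $\mathcal X'$, partially ordered by a partial order $\geq$ with positive cone $\mathcal X_+=\{X\in\mathcal X: X\geq 0\}$. Let $\mathcal M\subset\mathcal X$ be a vector subspace with $1<\dim\mathcal M<\infty$, carrying the relative topology, and let $\pi:\mathcal M\to\mathbb R$ be linear. Standing assumptions: (A1) there is $U\in\mathcal M\cap\mathcal X_+$ with $\pi(U)=1$; (A2) $\mathcal A\subsetneq\mathcal X$ is closed, contains $0$, and satisfies $\mathcal A+\mathcal X_+\subset\mathcal A$; (A3) the map $\rho:\mathcal X\to[-\infty,\infty]$, $\rho(X)=\inf\{\pi(Z): Z\in\mathcal M,\ X+Z\in\mathcal A\}$, is finitely valued and continuous. The optimal payoff map $\mathcal R:\mathcal X\rightrightarrows\mathcal M$ is $\mathcal R(X)=\{Z\in\mathcal M: X+Z\in\mathcal A,\ \pi(Z)=\rho(X)\}$. A set is polyhedral if it is a finite intersection of sets $\{X\in\mathcal X:\varphi(X)\geq\alpha\}$ with $\varphi\in\mathcal X'$, $\alpha\in\mathbb R$. $\mathcal R$ is lower semicontinuous at $X$ if for every open $\mathcal U\subset\mathcal M$ with $\mathcal R(X)\cap\mathcal U\neq\emptyset$ there is an open neighborhood $\mathcal U_X$ of $X$ in $\mathcal X$ such that $\mathcal R(Y)\cap\mathcal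 U\neq\emptyset$ for all $Y\in\mathcal U_X$. *)

From HB Require Import structures.
From mathcomp Require Import all_boot all_order all_algebra.
From mathcomp Require Import all_classical all_reals all_analysis.
Set Implicit Arguments. Unset Strict Implicit. Unset Printing Implicit Defensive.
Import Order.TTheory GRing.Theory Num.Theory numFieldNormedType.Exports.
Local Open Scope classical_set_scope.
Local Open Scope ring_scope.

Section Defs.
Context {R : realType} {E : tvsType R}.

Definition first_countable : Prop :=
  forall x : E, exists B : nat -> set E,
    (forall n, nbhs x (B n)) /\ (forall V, nbhs x V -> exists n, B n `<=` V).

Definition partial_order (ge : E -> E -> Prop) : Prop :=
  [/\ forall x, ge x x,
      forall x y, ge x y -> ge y x -> x = y &
      forall x y z, ge x y -> ge y z -> ge x z].

Definition positive_cone (ge : E -> E -> Prop) : set E := [set x | ge x 0].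

Definition dual_elt (phi : E -> R) : Prop :=
  (forall (a : R) (x y : E), phi (a *: x + y) = a * phi x + phi y) /\
  continuous phi.

Definition polyhedral (S : set E) : Prop :=
  exists (n : nat) (phi : 'I_n -> E -> R) (alpha : 'I_n -> R),
    (forall i, dual_elt (phi i)) /\
    S = [set x | forall i, alpha i <= phi i x].

Definition vector_subspace (M : set E) : Prop :=
  M 0 /\ forall (a : R) x y, M x -> M y -> M (a *: x + y).

Definition has_dim (M : set E) (n : nat) : Prop :=
  exists b : 'I_n -> E,
    [/\ forall i, M (b i),
        (forall c : 'I_n -> R, \sum_(i < n) c i *: b i = 0 -> forall i, c i = 0) &
        forall x, M x -> exists c : 'I_n -> R, x = \sum_(i < n) c i *: b i].

(* linear map on the subspace M (values of pi outside M are irrelevant) *)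
Definition linear_on (M : set E) (pi : E -> R) : Prop :=
  forall (a : R) x y, M x -> M y -> pi (a *: x + y) = a * pi x + pi y.

Definition rho (M : set E) (pi : E -> R) (A : set E) (X : E) : \bar R :=
  ereal_inf [set (pi Z)%:E | Z in [set Z | M Z /\ A (X + Z)]].

Definition optR (M : set E) (pi : E -> R) (A : set E) (X : E) : set E :=
  [set Z | [/\ M Z, A (X + Z) & (pi Z)%:E = rho M pi A X]].

(* lower semicontinuity at X; open subsets of M (relative topology) are M `&` O
   with O open in E *)
Definition lsc_at (M : set E) (F : E -> set E) (X : E) : Prop :=
  forall O : set E, open O ->
    F X `&` (M `&` O) !=set0 ->
    exists UX : set E, [/\ open UX, UX X &
      forall Y, UX Y -> F Y `&` (M `&` O) !=set0].

End Defs.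

From HB Require Import structures.
From mathcomp Require Import all_boot all_order all_algebra.
From mathcomp Require Import all_classical all_reals all_analysis.
From mathcomp Require Import ring lra.
Import Order.TTheory GRing.Theory Num.Theory numFieldNormedType.Exports.
Local Open Scope classical_set_scope.
Local Open Scope ring_scope.

(* Fix a basis [b] of [M] and write [A = {phi_k >= alpha_k}].
   A payoff [Z = sum_i c_i b_i] is optimal at [X] iff the unknowns
   [(t, c)] satisfy the finite linear system
     [phi_k (X + Z) >= alpha_k],  [pi Z <= t],  [t <= rho X],
   whose right-hand sides depend continuously on [X] by (A3).  Fourier-Motzkin
   elimination of the last unknown turns a parametric system into one with
   fewer unknowns and again continuous right-hand sides; the eliminated
   unknown can then be chosen as the admissible value closest to a given one,
   which depends continuously on the data.  By induction on the number of
   unknowns, solutions of such a system near a parameter [p0] can be taken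
   close to any solution at [p0] (as soon as the system is solvable).
   Solvability at every [X] holds because the projection of a polyhedron on
   the price axis is again a polyhedron, so the infimum [rho X] is attained.
   Only the basis of [M], the polyhedrality of [A] and (A3) are needed. *)

Section ParametricSystem.
Context {R : realType} {T : topologicalType}.

Definition dotn n (a z : nat -> R) : R := \sum_(j < n) a j * z j.

Lemma dotnS n a z : dotn n.+1 a z = dotn n a z + a n * z n.
Proof. by rewrite /dotn big_ord_recr. Qed.

Lemma eq_dotn {n} a {z z'} : (forall j, (j < n)%N -> z j = z' j) ->
  dotn n a z = dotn n a z'.
Proof. by move=> zz'; apply: eq_bigr => j _; rewrite zz'. Qed.

Lemma dotnBr n a z z' : dotn n a z - dotn n a z' = dotn n a (fun j => z j - z' j).
Proof. by rewrite /dotn -sumrB; apply: eq_bigr => j _; rewrite mulrBr. Qed.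

Lemma dotn_combl n x y a a' z :
  dotn n (fun j => x * a j - y * a' j) z = x * dotn n a z - y * dotn n a' z.
Proof. by rewrite /dotn !mulr_sumr -sumrB; apply: eq_bigr => j _; ring. Qed.

Lemma norm_dotn_le n a z d : (forall j, (j < n)%N -> `|z j| <= d) ->
  `|dotn n a z| <= (\sum_(j < n) `|a j|) * d.
Proof.
move=> zd; rewrite mulr_suml; apply: le_trans (ler_norm_sum _ _ _) _.
by apply: ler_sum => j _; rewrite normrM ler_wpM2l // zd.
Qed.

Record lsystem := LSystem {
  lsys_index : finType;
  coef : lsys_index -> nat -> R;
  rhs : lsys_index -> T -> R }.
Arguments LSystem {lsys_index}.
Arguments coef {l}.
Arguments rhs {l}.

Definition solves n (S : lsystem) p z := forall i : lsys_index S, rhs i p <= dotn n (coef i) z.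

Lemma eq_solves {n S p z z'} : solves n S p z ->
  (forall j, (j < n)%N -> z j = z' j) -> solves n S p z'.
Proof. by move=> Sz zz' i; rewrite -(eq_dotn (coef i) zz'). Qed.

Section FourierMotzkin.
Variables (n : nat) (S : lsystem).
Local Notation I := (lsys_index S).
Local Notation a := (@coef S).
Local Notation b := (@rhs S).

Definition fm_index : finType :=
  ({i : I | a i n == 0} + {i : I | 0 < a i n} * {i : I | a i n < 0})%type.

Definition fm_coef (k : fm_index) : nat -> R :=
  match k with
  | inl i => a (val i)
  | inr (l, u) => fun j => a (val l) n * a (val u) j - a (val u) n * a (val l) j
  end.

Definition fm_rhs (k : fm_index) : T -> R :=
  match k with
  | inl i => b (val i)
  | inr (l, u) => fun p => a (val l) n * b (val u) p - a (val u) n * b (val l) p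
  end.

Definition fm := LSystem fm_coef fm_rhs.

Lemma fm_solves {p z} : solves n.+1 S p z -> solves n fm p z.
Proof.
move=> Sz [[i /= /eqP ai0]|[[l /= lpos] [u /= uneg]]] /=.
  by have := Sz i; rewrite dotnS ai0 mul0r addr0.
have := Sz l; have := Sz u; rewrite !dotnS dotn_combl; nra.
Qed.

Lemma fm_rhs_continuous {p0} : (forall i, {for p0, continuous (b i)}) ->
  forall k, {for p0, continuous (fm_rhs k)}.
Proof.
move=> bc [i|[l u]] /=; first exact: bc.
by apply: cvgB; apply: cvgM; [exact: cvg_cst | exact: bc | exact: cvg_cst | exact: bc].
Qed.

(* Constraint [i] reads [z n >= fm_bound i p z] if [a i n > 0] and
   [z n <= fm_bound i p z] if [a i n < 0]. *)
Definition fm_bound i p (y : nat -> R) := (b i p - dotn n (a i) y) / a i n.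

Lemma fm_bound_le p y l u : solves n fm p y -> 0 < a l n -> a u n < 0 ->
  fm_bound l p y <= fm_bound u p y.
Proof.
move=> Sy lpos uneg; have := Sy (inr (exist _ l lpos, exist _ u uneg)).
rewrite /= dotn_combl /fm_bound ler_ndivlMr // mulrAC ler_pdivlMr //; nra.
Qed.

Definition extend (y : nat -> R) s j := if j == n then s else y j.

Lemma dotn_extend c y s : dotn n c (extend y s) = dotn n c y.
Proof. by apply: eq_dotn => j jn; rewrite /extend ltn_eqF. Qed.

Lemma extend_solves p y s :
  (forall i, 0 < a i n -> fm_bound i p y <= s) ->
  (forall i, a i n < 0 -> s <= fm_bound i p y) ->
  solves n fm p y -> solves n.+1 S p (extend y s).
Proof.
move=> lo up Sy i; rewrite dotnS dotn_extend /extend eqxx.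
case: (ltgtP 0 (a i n)) => ain.
- by have := lo i ain; rewrite /fm_bound ler_pdivrMr //; lra.
- by have := up i ain; rewrite /fm_bound ler_ndivlMr //; lra.
- have ai0 : a i n == 0 by rewrite -ain.
  by have := Sy (inl (exist _ i ai0)); rewrite /= -ain mul0r addr0.
Qed.

(* The admissible value of [z n] closest to [s0]. *)
Definition fm_pick p y s0 :=
  \big[Order.min/(\big[Order.max/s0]_(i | 0 < a i n) fm_bound i p y)]_(i | a i n < 0)
    fm_bound i p y.

Lemma fm_pick_solves {p y} s0 : solves n fm p y -> solves n.+1 S p (extend y (fm_pick p y s0)).
Proof.
move=> Sy; apply: extend_solves => // i ain.
  apply: le_bigmin; first exact: le_bigmax_cond.
  by move=> u uneg; apply: fm_bound_le.
exact: bigmin_le_cond.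
Qed.

Lemma solves_fm_bound {p z} i : solves n.+1 S p z ->
  (0 < a i n -> fm_bound i p z <= z n) /\ (a i n < 0 -> z n <= fm_bound i p z).
Proof.
move=> /(_ i); rewrite dotnS /fm_bound => Szi; split => ain.
  by rewrite ler_pdivrMr //; lra.
by rewrite ler_ndivlMr //; lra.
Qed.

Lemma fm_pick_near {p0 z0 p y e} : 0 < e -> solves n.+1 S p0 z0 ->
  (forall i, `|fm_bound i p y - fm_bound i p0 z0| < e) ->
  `|fm_pick p y (z0 n) - z0 n| < e.
Proof.
move=> e0 Sz0 near_b; rewrite ltr_distl; apply/andP; split.
  apply: lt_bigmin => [|i ain]; first by apply: lt_le_trans (bigmax_ge_id _ _ _ _); lra.
  have := (solves_fm_bound i Sz0).2 ain; have := near_b i; rewrite ltr_distl; lra.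
apply: le_lt_trans (bigmin_le_id _ _ _ _) _.
apply: bigmax_lt => [|i ain]; first lra.
have := (solves_fm_bound i Sz0).1 ain; have := near_b i; rewrite ltr_distl; lra.
Qed.

End FourierMotzkin.
Arguments fm_solves {n S p z}.
Arguments fm_rhs_continuous {n S p0}.
Arguments fm_bound n {S}.

Definition close_coords n d (y z : nat -> R) := forall j, (j < n)%N -> `|y j - z j| < d.

Lemma close_coords_le {n d d' y z} : d <= d' -> close_coords n d y z -> close_coords n d' y z.
Proof. by move=> dd' yz j /yz /lt_le_trans; apply. Qed.

Lemma residual_near a {f : T -> R} n {p0} z0 {e} : {for p0, continuous f} -> 0 < e ->
  exists2 d, 0 < d & \forall p \near p0, forall y, close_coords n d y z0 ->
    `|(f p - dotn n a y) - (f p0 - dotn n a z0)| < e.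
Proof.
move=> /cvgrPdist_lt fc e0; set sa := \sum_(j < n) `|a j|.
have sa0 : 0 <= sa by rewrite sumr_ge0.
exists (e / 2 / (sa + 1)); first by rewrite !divr_gt0 // ltr_wpDl.
have : \forall p \near p0, `|f p0 - f p| < e / 2 by apply: fc; rewrite divr_gt0.
apply: filterS => p; rewrite distrC => fp y yz0.
have dy : `|dotn n a y - dotn n a z0| <= sa * (e / 2 / (sa + 1)).
  by rewrite dotnBr norm_dotn_le // => j /yz0 /ltW.
have : sa * (e / 2 / (sa + 1)) <= e / 2.
  rewrite mulrA ler_pdivrMr ?ltr_wpDl //.
  have : 0 < e / 2 by rewrite divr_gt0.
  nra.
have -> : f p - dotn n a y - (f p0 - dotn n a z0) =
  (f p - f p0) - (dotn n a y - dotn n a z0) by ring.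
move: (ler_normB (f p - f p0) (dotn n a y - dotn n a z0)); lra.
Qed.

Lemma fm_bound_near n {S : lsystem} (i : lsys_index S) {p0} z0 {e} :
  {for p0, continuous (rhs i)} -> 0 < e ->
  exists2 d, 0 < d & \forall p \near p0, forall y, close_coords n d y z0 ->
    `|fm_bound n i p y - fm_bound n i p0 z0| < e.
Proof.
move=> bc e0; have [ai0|ai0] := eqVneq (coef i n) 0.
  (* both bounds are then [_ / 0 = 0] *)
  by exists 1 => //; apply: nearW => p y _; rewrite /fm_bound ai0 invr0 !mulr0 subrr normr0.
have ea_gt0 : 0 < e * `|coef i n| by rewrite mulr_gt0 ?normr_gt0.
have [d d0 near_d] := residual_near (coef i) n z0 bc ea_gt0.
exists d => //; apply: filterS near_d => p near_p y /near_p.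
by rewrite /fm_bound -mulrBl normrM normfV ltr_pdivrMr ?normr_gt0.
Qed.

Lemma near_uniform_radius {I : finType} (P : I -> R -> T -> Prop) {p0 : T} :
  (forall i d d' p, d' <= d -> P i d p -> P i d' p) ->
  (forall i, exists2 d, 0 < d & \forall p \near p0, P i d p) ->
  exists2 d, 0 < d & \forall p \near p0, forall i, P i d p.
Proof.
move=> antiP exP; have /choice[d /all_and2[d0 near_d]] :
    forall i, exists d, 0 < d /\ \forall p \near p0, P i d p.
  by move=> i; have [d] := exP i; exists d.
exists (\big[Order.min/1]_i d i); first exact: lt_bigmin.
apply: filter_forall => i; apply: filterS (near_d i) => p.
exact/antiP/bigmin_le.
Qed.

Lemma solves_lsc {n S p0 z0 e} :
  (forall i : lsys_index S, {for p0, continuous (rhs i)}) -> solves n S p0 z0 -> 0 < e ->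
  \forall p \near p0, (exists z, solves n S p z) ->
    exists2 z, solves n S p z & close_coords n e z z0.
Proof.
elim: n S p0 z0 e => [|n IH] S p0 z0 e bc Sz0 e0.
  by apply: nearW => p [z Sz]; exists z0 => //; apply: (eq_solves (z' := z0) Sz).
have [d d0 near_b] : exists2 d, 0 < d & \forall p \near p0, forall i : lsys_index S,
    forall y, close_coords n d y z0 -> `|fm_bound n i p y - fm_bound n i p0 z0| < e.
  apply: (near_uniform_radius (fun i d p => forall y, close_coords n d y z0 ->
    `|fm_bound n i p y - fm_bound n i p0 z0| < e)) => [i d d' p d'd near_i y|i].
    by move=> /(close_coords_le d'd) /near_i.
  exact: fm_bound_near.
have ed0 : 0 < Order.min e d by rewrite lt_min e0 d0.
have near_y := IH (fm n S) p0 z0 _ (fm_rhs_continuous bc) (fm_solves Sz0) ed0.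
apply: filterS2 near_y near_b => p near_y_p near_b_p [z /fm_solves Sz].
have [y Sy yz0] := near_y_p (ex_intro _ z Sz).
exists (extend n y (fm_pick n S p y (z0 n))); first exact: fm_pick_solves.
move=> j; rewrite ltnS leq_eqVlt /extend => /orP[/eqP->|jn]; rewrite ?eqxx.
  apply: fm_pick_near => // i; apply: near_b_p.
  by apply: close_coords_le yz0; rewrite ge_min lexx orbT.
by rewrite ltn_eqF //; apply: (close_coords_le _ yz0) _ jn; rewrite ge_min lexx.
Qed.

Lemma fm_projection n (S : lsystem) : exists S1 : lsystem, forall p t,
  (exists2 z, solves n.+1 S p z & z 0%N = t) <-> solves 1 S1 p (fun=> t).
Proof.
elim: n S => [|n IH] S.
  exists S => p t; split => [[z Sz <-]|St]; last by exists (fun=> t).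
  by apply: (eq_solves (z' := fun=> z 0%N) Sz) => j; rewrite ltnS leqn0 => /eqP->.
have [S1 S1P] := IH (fm n.+1 S); exists S1 => p t; rewrite -S1P.
split=> [[z /fm_solves Sz z0t]|[y Sy y0t]]; first by exists z.
by exists (extend n.+1 y (fm_pick n.+1 S p y 0)); [exact: fm_pick_solves | rewrite /extend].
Qed.

Lemma solves1_closed {S p r} :
  (forall e, 0 < e -> exists2 t, solves 1 S p (fun=> t) & r <= t < r + e) ->
  solves 1 S p (fun=> r).
Proof.
rewrite /solves /dotn => approx i; rewrite big_ord1.
have [ai_le0|ai_gt0] := leP (coef i 0%N) 0.
  have [t /(_ i) + /andP[rt _]] := approx 1 ltr01.
  by rewrite big_ord1; nra.
rewrite leNgt; apply/negP => ar_lt.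
have gap_gt0 : 0 < (rhs i p - coef i 0%N * r) / coef i 0%N.
  by rewrite divr_gt0 // subr_gt0.
have [t /(_ i) + /andP[_]] := approx _ gap_gt0.
rewrite big_ord1 -ltrBlDl ltr_pdivlMr //; nra.
Qed.

Lemma solves_min_attained n (S : lsystem) p r :
  (forall z, solves n.+1 S p z -> r <= z 0%N) ->
  (forall e, 0 < e -> exists2 z, solves n.+1 S p z & z 0%N < r + e) ->
  exists2 z, solves n.+1 S p z & z 0%N = r.
Proof.
move=> lb approx; have [S1 S1P] := fm_projection n S.
apply/S1P/solves1_closed => e /approx[z Sz zr]; exists (z 0%N); last by rewrite lb.
by apply/S1P; exists z.
Qed.

End ParametricSystem.
Arguments LSystem {R T lsys_index}.

Section LinearCombination.
Context {R : realType} {E : tvsType R}.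

Lemma lincomb_near {n} {b : 'I_n -> E} {w0 : 'I_n -> R} {O : set E} :
  nbhs (\sum_(i < n) w0 i *: b i) O ->
  exists2 e, 0 < e & forall w, (forall i, `|w i - w0 i| < e) -> O (\sum_(i < n) w i *: b i).
Proof.
elim: n b w0 O => [|n IH] b w0 O.
  by rewrite big_ord0 => /nbhs_singleton O0; exists 1 => // w _; rewrite big_ord0.
rewrite big_ord_recr /= => O0.
have [[U V] /= [U0 V0] UV_O] := add_continuous (_, _) _ O0.
have [e1 e1_gt0 near_U] := IH _ _ _ U0.
have [[C D] /= [/nbhs_ballP[e2 /= e2_gt0 e2C] D0] CD_V] := scale_continuous (_, _) _ V0.
exists (Order.min e1 e2); first by rewrite lt_min e1_gt0 e2_gt0.
move=> w close_w; rewrite big_ord_recr /=; apply: (UV_O (_, _)); split => /=.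
  by apply: near_U => i; have := close_w (widen_ord (leqnSn n) i); rewrite lt_min => /andP[].
apply: (CD_V (_, _)); split => /=; last exact: nbhs_singleton D0.
by apply: e2C; rewrite /ball /= distrC; have := close_w ord_max; rewrite lt_min => /andP[].
Qed.

Context {M : set E}.
Hypothesis M_subspace : vector_subspace M.

Lemma subspace_lincomb {n} {b : 'I_n -> E} (w : 'I_n -> R) :
  (forall i, M (b i)) -> M (\sum_(i < n) w i *: b i).
Proof.
move=> bM; elim/big_rec: _ => [|i x _ Mx]; first exact: M_subspace.1.
exact: M_subspace.2.
Qed.

Lemma linear_on_lincomb {f : E -> R} {n} {b : 'I_n -> E} (w : 'I_n -> R) :
  linear_on M f -> (forall i, M (b i)) ->
  f (\sum_(i < n) w i *: b i) = \sum_(i < n) w i * f (b i).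
Proof.
move=> flin bM; have f0 : f 0 = 0.
  by have := flin 1 0 0 M_subspace.1 M_subspace.1; rewrite scale1r addr0 mul1r; lra.
suff [] : M (\sum_(i < n) w i *: b i) /\ f (\sum_(i < n) w i *: b i) = \sum_(i < n) w i * f (b i)
  by [].
apply: (big_rec2 (fun s x => M x /\ f x = s)) => [|i s x _ [Mx <-]].
  by split; [exact: M_subspace.1 | ].
by split; [exact: M_subspace.2 | rewrite flin].
Qed.

End LinearCombination.

Section OptimalPayoff.
Context {R : realType} {E : tvsType R} {M : set E} { pi : E -> R } {A : set E}.
Context {n m : nat} {b : 'I_n -> E} {phi : 'I_m -> E -> R} {alpha : 'I_m -> R}.
Hypothesis M_subspace : vector_subspace M.
Hypothesis b_in_M : forall i, M (b i).
Hypothesis b_spans : forall x, M x -> exists c : 'I_n -> R, x = \sum_(i < n) c i *: b i.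
Hypothesis pi_linear : linear_on M pi.
Hypothesis phi_dual : forall k, dual_elt (phi k).
Hypothesis A_def : A = [set x | forall k, alpha k <= phi k x].
Hypothesis rho_fin : forall X, rho M pi A X \is a fin_num.
Hypothesis rho_continuous : continuous (fun X => fine (rho M pi A X)).

Local Notation rhoR X := (fine (rho M pi A X)).

(* The unknowns [z] encode the price [z 0] and the payoff with coordinates
   [z 1, ..., z n] in the basis [b]. *)
Definition payoff_of (z : nat -> R) : E := \sum_(i < n) z i.+1 *: b i.

Definition lift_coef (a0 : R) (f : 'I_n -> R) : nat -> R :=
  fun j => if j is j'.+1 then oapp f 0 (insub j') else a0.

Lemma lift_coefS a0 f (i : 'I_n) : lift_coef a0 f i.+1 = f i.
Proof. by rewrite /= valK. Qed.

Lemma dotn_lift_coef a0 f z :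
  dotn n.+1 (lift_coef a0 f) z = a0 * z 0%N + \sum_(i < n) f i * z i.+1.
Proof.
by rewrite /dotn big_ord_recl; congr (_ + _); apply: eq_bigr => i _; rewrite lift_coefS.
Qed.

Lemma payoff_of_lift_coef t c : payoff_of (lift_coef t c) = \sum_(i < n) c i *: b i.
Proof. by apply: eq_bigr => i _; rewrite lift_coefS. Qed.

Lemma phiD k x y : phi k (x + y) = phi k x + phi k y.
Proof. by have := (phi_dual k).1 1 x y; rewrite scale1r mul1r. Qed.

Lemma phi_payoff k z : \sum_(i < n) phi k (b i) * z i.+1 = phi k (payoff_of z).
Proof.
have phi_linear : linear_on [set: E] (phi k) by move=> a x y _ _; apply: (phi_dual k).1.
have setT_subspace : vector_subspace [set: E] by [].
rewrite (linear_on_lincomb setT_subspace _ phi_linear) //.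
by apply: eq_bigr => i _; rewrite mulrC.
Qed.

Lemma pi_payoff z : \sum_(i < n) pi (b i) * z i.+1 = pi (payoff_of z).
Proof.
rewrite (linear_on_lincomb M_subspace _ pi_linear) //.
by apply: eq_bigr => i _; rewrite mulrC.
Qed.

(* Constraint [Some k] is the [k]-th face of [A] at [Y + payoff_of z];
   constraint [None] is [pi (payoff_of z) <= z 0]. *)
Definition feasible_coef (k : option 'I_m) : nat -> R :=
  if k is Some k then lift_coef 0 (fun i => phi k (b i)) else lift_coef 1 (fun i => - pi (b i)).

Definition feasible_rhs (k : option 'I_m) : E -> R :=
  if k is Some k then fun Y => alpha k - phi k Y else fun=> 0.

Definition feasible_system := LSystem feasible_coef feasible_rhs.

Lemma dotn_feasible_price z : dotn n.+1 (feasible_coef None) z = z 0%N - pi (payoff_of z).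
Proof.
rewrite dotn_lift_coef -pi_payoff mul1r -sumrN.
by congr (_ + _); apply: eq_bigr => i _; rewrite mulNr.
Qed.

Lemma dotn_feasible_face k z : dotn n.+1 (feasible_coef (Some k)) z = phi k (payoff_of z).
Proof. by rewrite dotn_lift_coef mul0r add0r phi_payoff. Qed.

Lemma feasible_solves Y z : solves n.+1 feasible_system Y z <->
  A (Y + payoff_of z) /\ pi (payoff_of z) <= z 0%N.
Proof.
rewrite A_def; split => [Sz|[Az pz] [k|]] /=.
- split => [k|]; last by have := Sz None; rewrite /= dotn_feasible_price; lra.
  by have := Sz (Some k); rewrite /= dotn_feasible_face phiD; lra.
- by have := Az k; rewrite dotn_feasible_face phiD; lra.
- by rewrite dotn_feasible_price; lra.
Qed.

Lemma rho_le_price {Y Z} : M Z -> A (Y + Z) -> rhoR Y <= pi Z.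
Proof. by move=> MZ AZ; rewrite -lee_fin fineK //; apply: ereal_inf_lbound; exists Z. Qed.

Lemma rho_approx Y {e} : 0 < e -> exists2 Z, M Z /\ A (Y + Z) & pi Z < rhoR Y + e.
Proof.
move=> e0; have : (rho M pi A Y < (rhoR Y + e)%:E)%E.
  by rewrite -[X in (X < _)%E]fineK // lte_fin ltrDl.
by move=> /ereal_inf_lt[_ [Z MAZ <-]]; rewrite lte_fin; exists Z.
Qed.

(* Adding [z 0 <= rho Y] to the feasible system singles out the optimal payoffs. *)
Definition optimal_coef (k : option (option 'I_m)) : nat -> R :=
  if k is Some k then feasible_coef k else lift_coef (-1) (fun=> 0).

Definition optimal_rhs (k : option (option 'I_m)) : E -> R :=
  if k is Some k then feasible_rhs k else fun Y => - rhoR Y.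

Definition optimal_system := LSystem optimal_coef optimal_rhs.

Lemma optimal_solves Y z : solves n.+1 optimal_system Y z <->
  solves n.+1 feasible_system Y z /\ z 0%N <= rhoR Y.
Proof.
have dotn_None : dotn n.+1 (optimal_coef None) z = - z 0%N.
  by rewrite dotn_lift_coef big1 ?addr0 ?mulN1r // => i _; rewrite mul0r.
split => [Sz|[Sz zrho] [k|]].
- by split => [k|]; [exact: Sz (Some k) | have := Sz None; rewrite /= dotn_None; lra].
- exact: Sz k.
- by rewrite /= dotn_None; lra.
Qed.

Lemma optimal_solves_optR Y z : solves n.+1 optimal_system Y z -> optR M pi A Y (payoff_of z).
Proof.
move=> /optimal_solves[/feasible_solves[Az pz] zrho].
have Mz : M (payoff_of z) by apply: subspace_lincomb.
split => //; rewrite -[rho _ _ _ _]fineK //; congr (_%:E).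
by have := rho_le_price Mz Az; lra.
Qed.

Lemma optR_solves {Y Z} : optR M pi A Y Z ->
  exists2 c : 'I_n -> R, Z = \sum_(i < n) c i *: b i &
    solves n.+1 optimal_system Y (lift_coef (pi Z) c).
Proof.
move=> [MZ AZ piZ]; have [c Zc] := b_spans Z MZ; exists c => //.
apply/optimal_solves; rewrite /= -(fineK (rho_fin Y)) -piZ /=.
by split => //; apply/feasible_solves; rewrite payoff_of_lift_coef -Zc.
Qed.

Lemma optimal_solvable Y : exists z, solves n.+1 optimal_system Y z.
Proof.
have [|e e0|z Sz zrho] := solves_min_attained n feasible_system Y (rhoR Y).
- move=> z /feasible_solves[Az pz]; apply: le_trans pz.
  by apply: rho_le_price => //; apply: subspace_lincomb.
- have [Z [MZ AZ] piZ] := rho_approx Y e0; have [c Zc] := b_spans Z MZ.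
  exists (lift_coef (pi Z) c) => //.
  by apply/feasible_solves; rewrite payoff_of_lift_coef -Zc.
- by exists z; apply/optimal_solves; rewrite zrho.
Qed.

Lemma optimal_rhs_continuous X k : {for X, continuous (optimal_rhs k)}.
Proof.
case: k => [[k|]|] /=.
- exact: cvgB (cvg_cst _) ((phi_dual k).2 X).
- exact: cvg_cst.
- exact: continuousN (rho_continuous X).
Qed.

Lemma optR_lsc X : lsc_at M (optR M pi A) X.
Proof.
move=> O O_open [Z0 [optZ0 [_ O_Z0]]].
have [c0 Z0E S0] := optR_solves optZ0.
have O_nbhs : nbhs (\sum_(i < n) c0 i *: b i) O by rewrite -Z0E; apply: open_nbhs_nbhs.
have [e e0 near_O] := lincomb_near O_nbhs.
have := solves_lsc (S := optimal_system) (optimal_rhs_continuous X) S0 e0.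
rewrite /prop_near1 nbhsE => -[U [U_open UX] U_sub]; exists U; split => // Y /U_sub.
move=> /(_ (optimal_solvable Y))[z Sz close_z].
exists (payoff_of z); split; first exact: optimal_solves_optR.
split; first exact: subspace_lincomb.
by apply: near_O => i; have := close_z i.+1 (ltn_ord i); rewrite lift_coefS.
Qed.

End OptimalPayoff.

Theorem mainTheorem1 (R : realType) (E : tvsType R)
  (ge : E -> E -> Prop) (M : set E) (pi : E -> R) (A : set E) :
  hausdorff_space E ->
  first_countable (E := E) ->
  partial_order ge ->
  vector_subspace M ->
  (exists n : nat, (1 < n)%N /\ has_dim M n) ->
  linear_on M pi ->
  (* (A1) *)
  (exists U, [/\ M U, positive_cone ge U & pi U = 1]) ->
  (* (A2) *)
  closed A -> A 0 -> A <> setT ->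
  (forall x p, A x -> positive_cone ge p -> A (x + p)) ->
  (* (A3) *)
  (forall X, rho M pi A X \is a fin_num) ->
  continuous (fun X => fine (rho M pi A X)) ->
  (* A polyhedral *)
  polyhedral A ->
  forall X : E, lsc_at M (optR M pi A) X.
Proof.
move=> _ _ _ M_subspace [n [_ [b [b_in_M _ b_spans]]]] pi_linear _ _ _ _ _
  rho_fin rho_continuous [m [phi [alpha [phi_dual A_def]]]].
exact: optR_lsc M_subspace b_in_M b_spans pi_linear phi_dual A_def rho_fin rho_continuous.
Qed.
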